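(* Let $G_1=(V_1,E_1)$ and $G_2=(V_2,E_2)$ be finite simple directed graphs (edges are ordered pairs of distinct vertices, written $ij$ for $(i,j)$). Consider binary vectors $\mathbf{x}=(x_{i,k})_{(i,k)\in V_1\times V_2}$, $\mathbf{y}=(y_{ij,kl})_{(ij,kl)\in E_1\times E_2}$, $\mathbf{u}=(u_i)_{i\in V_1}$, $\mathbf{v}=(v_k)_{k\in V_2}$, $\mathbf{e}=(e_{ij})_{ij\in E_1}$, $\mathbf{f}=(f_{kl})_{kl\in E_2}$, all with entries in $\{0,1\}$. Consider the constraints (C1) $u_i+\sum_{k\in V_2}x_{i,k}=1$ for all $i\in V_1$; (C2) $v_k+\sum_{i\in V_1}x_{i,k}=1$ for all $k\in V_2$; (C3) $e_{ij}+\sum_{kl\in E_2}y_{ij,kl}=1$ for all $ij\in E_1$; (C4) $f_{kl}+\sum_{ij\in E_1}y_{ij,kl}=1$ for all $kl\in E_2$; (C5) $y_{ij,kl}\le x_{i,k}$ for all $(ij,kl)\in E_1\times E_2$; (C6) $y_{ij,kl}\le x_{j,l}$ for all $(ij,kl)\in E_1\times E_2$; (C7) $\sum_{l\in V_2:\,kl\in E_2}y_{ij,kl}\le x_{i,k}$ for all $k\in V_2$ and all $ij\in E_1$; (C8) $\sum_{k\in V_2:\,kl\in E_2}y_{ij,kl}\le x_{j,l}$ for all $l\in V_2$ and all $ij\in E_1$. Let $\Gamma_1$ be the set of binary 6-tuples $(\mathbf{x},\mathbf{y},\mathbf{u},\mathbf{v},\mathbf{e},\mathbf{f})$ satisfying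 (C1)–(C6), and $\Gamma_2$ the set of binary 6-tuples satisfying (C1)–(C4), (C7) and (C8). Then $\Gamma_1=\Gamma_2$.
   Context: The variables encode an edit path: $x_{i,k}=1$ iff vertex $i$ is substituted with $k$, $y_{ij,kl}=1$ iff edge $ij$ is substituted with $kl$, $u_i$/$e_{ij}$ indicate deletion of vertex $i$/edge $ij$ from $G_1$, and $v_k$/$f_{kl}$ indicate insertion of vertex $k$/edge $kl$ of $G_2$. *)

From mathcomp Require Import all_boot.
Set Implicit Arguments. Unset Strict Implicit. Unset Printing Implicit Defensive.

Definition simple_digraph (V : finType) (r : rel V) : Prop := irreflexive r.

Definition edge (V : finType) (r : rel V) : Type := {p : V * V | r p.1 p.2}.
Definition etail (V : finType) (r : rel V) (a : edge r) : V := (sval a).1.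
Definition ehead (V : finType) (r : rel V) (a : edge r) : V := (sval a).2.

Section Constraints.
Variables (V1 V2 : finType) (r1 : rel V1) (r2 : rel V2).
Local Notation E1 := (edge r1).
Local Notation E2 := (edge r2).
(* binary vectors: entries in {0,1}, represented as bools coerced to nat *)
Variables (x : V1 -> V2 -> bool) (y : E1 -> E2 -> bool)
          (u : V1 -> bool) (v : V2 -> bool) (e : E1 -> bool) (f : E2 -> bool).

Definition C1 := forall i : V1, u i + \sum_(k : V2) x i k = 1.
Definition C2 := forall k : V2, v k + \sum_(i : V1) x i k = 1.
Definition C3 := forall a : E1, e a + \sum_(b : E2) y a b = 1.
Definition C4 := forall b : E2, f b + \sum_(a : E1) y a b = 1.
Definition C5 := forall (a : E1) (b : E2), y a b <= x (etail a) (etail b).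
Definition C6 := forall (a : E1) (b : E2), y a b <= x (ehead a) (ehead b).
Definition C7 := forall (k : V2) (a : E1),
  \sum_(b : E2 | etail b == k) y a b <= x (etail a) k.
Definition C8 := forall (l : V2) (a : E1),
  \sum_(b : E2 | ehead b == l) y a b <= x (ehead a) l.

Definition Gamma1 : Prop := [/\ C1, C2, C3, C4 & C5 /\ C6].
Definition Gamma2 : Prop := [/\ C1, C2, C3, C4 & C7 /\ C8].
End Constraints.

From mathcomp Require Import all_boot.
Set Implicit Arguments. Unset Strict Implicit. Unset Printing Implicit Defensive.

(* By (C3) every edge of G1 is substituted at most once, so a 0/1 bound on
   each single term y_{ij,kl} is the same as that bound on any partial sum of
   the y_{ij,kl} over kl. The graphs need not be loop-free for this. *)

Lemma sum_fiber_le_bool (T S : finType) (F : T -> bool) (g : T -> S)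
    (c : S -> bool) :
  \sum_t F t <= 1 ->
  (forall t, F t <= c (g t)) <-> (forall s, \sum_(t | g t == s) F t <= c s).
Proof.
move=> sumF_le1; split=> [F_le s | sum_le t].
- case cs: (c s).
  + apply: leq_trans sumF_le1.
    by rewrite [X in _ <= X](bigID (fun t => g t == s)) leq_addr.
  + rewrite leqn0 sum_nat_eq0; apply/forall_inP => t /eqP gt_s.
    by have := F_le t; rewrite gt_s cs leqn0.
- apply: leq_trans (sum_le (g t)).
  by rewrite (bigD1 t) //= leq_addr.
Qed.

Section EdgeConstraints.
Variables (V1 V2 : finType) (r1 : rel V1) (r2 : rel V2).
Variables (x : V1 -> V2 -> bool) (y : edge r1 -> edge r2 -> bool)
          (e : edge r1 -> bool).
Hypothesis c3 : C3 y e.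

Let sum_y_le1 (a : edge r1) : \sum_b y a b <= 1.
Proof. by rewrite -(c3 a) leq_addl. Qed.

Lemma C5_C7 : C5 x y <-> C7 x y.
Proof.
split=> [c5 k a | c7 a].
- exact: (sum_fiber_le_bool _ _ (sum_y_le1 a)).1 (c5 a) k.
- exact: (sum_fiber_le_bool _ _ (sum_y_le1 a)).2 (c7^~ a).
Qed.

Lemma C6_C8 : C6 x y <-> C8 x y.
Proof.
split=> [c6 l a | c8 a].
- exact: (sum_fiber_le_bool _ _ (sum_y_le1 a)).1 (c6 a) l.
- exact: (sum_fiber_le_bool _ _ (sum_y_le1 a)).2 (c8^~ a).
Qed.

End EdgeConstraints.

Theorem proposition2 (V1 V2 : finType) (r1 : rel V1) (r2 : rel V2)
  (H1 : simple_digraph r1) (H2 : simple_digraph r2)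
  (x : V1 -> V2 -> bool) (y : edge r1 -> edge r2 -> bool)
  (u : V1 -> bool) (v : V2 -> bool) (e : edge r1 -> bool) (f : edge r2 -> bool) :
  Gamma1 x y u v e f <-> Gamma2 x y u v e f.
Proof.
split=> -[c1 c2 c3 c4 [c56 c78]]; split=> //; split.
- exact/(C5_C7 x c3).
- exact/(C6_C8 x c3).
- exact/(C5_C7 x c3).
- exact/(C6_C8 x c3).
Qed.
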